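(* Let $\mathcal Z,\mathcal S$ be finite, $f:\mathcal Z\times\mathcal S\to\mathbb R$, and $(Z_i,S_i)$, $i=1,\dots,n$, random variables with a common joint law $P_{ZS}$ (not depending on $i$) such that $\Pr[\mathbf S=\mathbf s\mid\mathbf Z=\mathbf z]=\prod_{i=1}^n\Pr[S_i=s_i\mid Z_i=z_i]$. Let $P_{S|Z}$ be the conditional of $P_{ZS}$. Then for every type $p$ with $\Pr[\hat p_{\mathbf Z}=p]>0$, $$\operatorname{Var}\Big[\sum_{i=1}^n f(Z_i,S_i)\ \Big|\ \hat p_{\mathbf Z}=p\Big]=n\,\mathbb E_{p}\Big[\operatorname{Var}_{P_{S|Z}}[f(\tilde Z,S)\mid\tilde Z]\Big],$$ where $\tilde Z\sim p$ and, given $\tilde Z$, $S\sim P_{S|Z}(\cdot|\tilde Z)$.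
   Context: $\mathbf Z=(Z_1,\dots,Z_n)$, $\mathbf S=(S_1,\dots,S_n)$; $\hat p_{\mathbf Z}$ is the empirical distribution (type) of $\mathbf Z$. *)

(* Finite discrete probability: the joint law of
   (Z_1..Z_n, S_1..S_n) is a pmf Q on the finite sample space
   {ffun 'I_n -> Z} * {ffun 'I_n -> S}. *)
From mathcomp Require Import all_boot all_order all_algebra.
From mathcomp Require Import reals.
Set Implicit Arguments. Unset Strict Implicit. Unset Printing Implicit Defensive.
Import Order.TTheory GRing.Theory Num.Theory.
Local Open Scope ring_scope.

Section Defs.
Variables (R : realType) (Z S : finType) (n : nat).

Definition sample := ({ffun 'I_n -> Z} * {ffun 'I_n -> S})%type.

Definition is_pmf (T : finType) (Q : {ffun T -> R}) : Prop :=
  (forall w, 0 <= Q w) /\ \sum_w Q w = 1.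

Definition probZ (Q : {ffun sample -> R}) (z : {ffun 'I_n -> Z}) : R :=
  \sum_(s : {ffun 'I_n -> S}) Q (z, s).

Definition marg (Q : {ffun sample -> R}) (i : 'I_n) (a : Z) (b : S) : R :=
  \sum_(w : sample | (w.1 i == a) && (w.2 i == b)) Q w.

Definition margZ (Q : {ffun sample -> R}) (i : 'I_n) (a : Z) : R :=
  \sum_(b : S) marg Q i a b.

Definition cond_indep (Q : {ffun sample -> R}) : Prop :=
  forall z s, 0 < probZ Q z ->
    Q (z, s) / probZ Q z = \prod_(i < n) (marg Q i (z i) (s i) / margZ Q i (z i)).

Definition emp (z : {ffun 'I_n -> Z}) : {ffun Z -> R} :=
  [ffun a => #|[set i | z i == a]|%:R / n%:R].

Definition prob (Q : {ffun sample -> R}) (E : pred sample) : R :=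
  \sum_(w | E w) Q w.

Definition cexp (Q : {ffun sample -> R}) (E : pred sample) (X : sample -> R) : R :=
  (\sum_(w | E w) Q w * X w) / prob Q E.

Definition cvar (Q : {ffun sample -> R}) (E : pred sample) (X : sample -> R) : R :=
  cexp Q E (fun w => (X w - cexp Q E X) ^+ 2).

End Defs.

Section PSZ.
Variables (R : realType) (Z S : finType).

Definition PZ (PZS : {ffun Z * S -> R}) (a : Z) : R := \sum_b PZS (a, b).
Definition PSgZ (PZS : {ffun Z * S -> R}) (a : Z) (b : S) : R := PZS (a, b) / PZ PZS a.

Definition cmeanSZ (PZS : {ffun Z * S -> R}) (f : Z -> S -> R) (a : Z) : R :=
  \sum_b PSgZ PZS a b * f a b.
Definition cvarSZ (PZS : {ffun Z * S -> R}) (f : Z -> S -> R) (a : Z) : R :=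
  \sum_b PSgZ PZS a b * (f a b - cmeanSZ PZS f a) ^+ 2.
End PSZ.

From mathcomp Require Import all_boot all_order all_algebra.
From mathcomp Require Import reals.
Import Order.TTheory GRing.Theory Num.Theory.
Local Open Scope ring_scope.
Set Implicit Arguments. Unset Strict Implicit.

(** Conditional independence says that, given [Z = z] with [Pr[Z = z] > 0],
    [S] has the product law [prod_k P_{S|Z}(. | z_k)].  Under a product law the
    summands [f (z_i, S_i)] are independent, so the sum has mean
    [sum_i E[f (z_i, S) | z_i]] and variance [sum_i Var[f (z_i, S) | z_i]].
    Both depend on [z] only through its type: [sum_i g (z_i) = n sum_a p(a) g(a)].
    Hence on the type class of [p] the conditional mean is a constant, and the
    conditional variance averages the constant [n E_p[Var(f | Z)]]. *)

Section ProductLaw.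
Variables (R : comPzRingType) (S : finType) (n : nat) (q : 'I_n -> S -> R).

Definition Eprod (X : {ffun 'I_n -> S} -> R) : R :=
  \sum_(s : {ffun 'I_n -> S}) (\prod_k q k (s k)) * X s.

Lemma eq_Eprod (X Y : {ffun 'I_n -> S} -> R) : X =1 Y -> Eprod X = Eprod Y.
Proof. by move=> eqXY; apply: eq_bigr => s _; rewrite eqXY. Qed.

Lemma Eprod_sum (J : finType) (X : J -> {ffun 'I_n -> S} -> R) :
  Eprod (fun s => \sum_j X j s) = \sum_j Eprod (X j).
Proof. by rewrite /Eprod; under eq_bigr do rewrite mulr_sumr; exact: exchange_big. Qed.

Lemma Eprod_prod (G : 'I_n -> S -> R) :
  Eprod (fun s => \prod_k G k (s k)) = \prod_k \sum_b q k b * G k b.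
Proof.
by rewrite bigA_distr_bigA; apply: eq_bigr => s _; rewrite big_split.
Qed.

Hypothesis q_sum1 : forall k, \sum_b q k b = 1.

Lemma Eprod_prod_in (A : {set 'I_n}) (G : 'I_n -> S -> R) :
  Eprod (fun s => \prod_(k in A) G k (s k)) = \prod_(k in A) \sum_b q k b * G k b.
Proof.
set GA := fun k => if k \in A then G k else fun=> 1.
rewrite (@eq_Eprod _ (fun s => \prod_k GA k (s k))); last first.
  by move=> s; rewrite big_mkcond; apply: eq_bigr => k _; rewrite /GA; case: ifP.
rewrite Eprod_prod [RHS]big_mkcond; apply: eq_bigr => k _; rewrite /GA.
by case: ifP => // _; under eq_bigr do rewrite mulr1.
Qed.

Lemma Eprod_coord (i : 'I_n) (g : S -> R) :
  Eprod (fun s => g (s i)) = \sum_b q i b * g b.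
Proof.
rewrite -(big_set1 *%R i (fun k => \sum_b q k b * g b)).
by rewrite -(Eprod_prod_in [set i] (fun=> g)); apply: eq_Eprod => s; rewrite big_set1.
Qed.

Lemma Eprod_coord2 (i j : 'I_n) (g h : S -> R) : i != j ->
  Eprod (fun s => g (s i) * h (s j))
  = (\sum_b q i b * g b) * (\sum_b q j b * h b).
Proof.
rewrite eq_sym => neq_ji; have i_notin_j : i \notin [set j] by rewrite inE eq_sym.
have := Eprod_prod_in [set i; j] (fun k => if k == i then g else h).
rewrite big_setU1 // big_set1 eqxx (negbTE neq_ji) => <-.
by apply: eq_Eprod => s; rewrite big_setU1 // big_set1 eqxx (negbTE neq_ji).
Qed.

Lemma Eprod_sum_coord (X : 'I_n -> S -> R) :
  Eprod (fun s => \sum_i X i (s i)) = \sum_i \sum_b q i b * X i b.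
Proof. by rewrite Eprod_sum; apply: eq_bigr => i _; exact: Eprod_coord. Qed.

(* Bienaymé: the cross terms vanish because each centred coordinate has mean 0. *)
Lemma Eprod_sum_coord_centred_sq (X : 'I_n -> S -> R) :
  let m i := \sum_b q i b * X i b in
  Eprod (fun s => (\sum_i X i (s i) - \sum_i m i) ^+ 2)
  = \sum_i \sum_b q i b * (X i b - m i) ^+ 2.
Proof.
move=> m; set Y := fun i b => X i b - m i.
have mean_Y j : \sum_b q j b * Y j b = 0.
  under eq_bigr do rewrite mulrBr.
  by rewrite sumrB -mulr_suml q_sum1 mul1r subrr.
rewrite (@eq_Eprod _ (fun s => \sum_i \sum_j Y i (s i) * Y j (s j))); last first.
  by move=> s; rewrite -sumrB expr2 big_distrlr.
rewrite Eprod_sum; apply: eq_bigr => i _.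
rewrite Eprod_sum (bigD1 i) //= big1 ?addr0 => [|j neq_ji].
  rewrite (Eprod_coord i (fun b => Y i b * Y i b)).
  by apply: eq_bigr => b _; rewrite expr2.
by rewrite Eprod_coord2 1?eq_sym // mean_Y mul0r.
Qed.

End ProductLaw.

Lemma PSgZ_sum1 (R : realType) (Z S : finType) (PZS : {ffun Z * S -> R}) a :
  PZ PZS a != 0 -> \sum_b PSgZ PZS a b = 1.
Proof. by move=> PZ_neq0; rewrite -mulr_suml divff. Qed.

Lemma sum_emp (R : realType) (Z : finType) (n : nat) (z : {ffun 'I_n -> Z})
    (g : Z -> R) :
  \sum_i g (z i) = n%:R * \sum_a emp R z a * g a.
Proof.
have card_emp a : #|[set i | z i == a]|%:R = n%:R * emp R z a :> R.
  rewrite ffunE; case: n z => [|m] z; last by rewrite mulrCA divff ?mulr1 ?pnatr_eq0.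
  rewrite mul0r; apply/eqP.
  by rewrite pnatr_eq0 -leqn0 (leq_trans (max_card _)) ?card_ord.
rewrite mulr_sumr (partition_big z predT) //=; apply: eq_bigr => a _.
rewrite (eq_bigr (fun=> g a)) => [|i /eqP -> //].
by rewrite sumr_const mulrA -card_emp mulr_natl cardsE.
Qed.

Section ConditionallyIndependentSample.
Variables (R : realType) (Z S : finType) (n : nat).
Variables (PZS : {ffun Z * S -> R}) (Q : {ffun sample Z S n -> R}).
Hypothesis Q_ge0 : forall w, 0 <= Q w.
Hypothesis marg_Q : forall i a b, marg Q i a b = PZS (a, b).
Hypothesis Q_cond_indep : cond_indep Q.

Let lawS_given (z : {ffun 'I_n -> Z}) k := PSgZ PZS (z k).

Lemma margZ_Q i a : margZ Q i a = PZ PZS a.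
Proof. by apply: eq_bigr => b _; rewrite marg_Q. Qed.

Lemma Q_factor z s : 0 < probZ Q z -> Q (z, s) = probZ Q z * \prod_k lawS_given z k (s k).
Proof.
move=> probZ_gt0; rewrite -[Q _](divfK (lt0r_neq0 probZ_gt0)) mulrC.
rewrite Q_cond_indep //; congr (_ * _); apply: eq_bigr => k _.
by rewrite marg_Q margZ_Q.
Qed.

(* If [Pr[Z_k = z_k] = 0], the factor [k] of the product law is [0/0 = 0]. *)
Lemma PZ_neq0 z k : 0 < probZ Q z -> PZ PZS (z k) != 0.
Proof.
move=> probZ_gt0; apply/eqP => PZ0.
have probZ0 : probZ Q z = 0.
  apply: big1 => s _; rewrite Q_factor // (bigD1 k) //= /lawS_given /PSgZ PZ0.
  by rewrite invr0 mulr0 mul0r mulr0.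
by move: probZ_gt0; rewrite probZ0 ltxx.
Qed.

Lemma lawS_given_sum1 z : 0 < probZ Q z -> forall k, \sum_b lawS_given z k b = 1.
Proof. by move=> probZ_gt0 k; rewrite PSgZ_sum1 ?PZ_neq0. Qed.

Lemma sum_fiber_pair (A : pred {ffun 'I_n -> Z}) (F : sample Z S n -> R) :
  \sum_(w | A w.1) F w = \sum_(z | A z) \sum_s F (z, s).
Proof.
by rewrite pair_big_dep; apply: eq_big => [w|[z s] _] //=; rewrite andbT.
Qed.

Lemma cexp_fiberwise_const (A : pred {ffun 'I_n -> Z}) (X : sample Z S n -> R) c :
  0 < prob Q (fun w => A w.1) ->
  (forall z, A z -> 0 < probZ Q z -> Eprod (lawS_given z) (fun s => X (z, s)) = c) ->
  cexp Q (fun w => A w.1) X = c.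
Proof.
move=> prob_gt0 fiber_mean.
have fiber_sum z : A z -> \sum_s Q (z, s) * X (z, s) = probZ Q z * c.
  move=> Az; have : 0 <= probZ Q z by apply: sumr_ge0.
  rewrite le0r => /orP[/eqP probZ0|probZ_gt0].
    rewrite probZ0 mul0r big1 // => s _.
    by rewrite (psumr_eq0P (fun s _ => Q_ge0 (z, s)) probZ0) ?mul0r.
  rewrite -(fiber_mean z Az probZ_gt0) /Eprod mulr_sumr.
  by apply: eq_bigr => s _; rewrite Q_factor // mulrA.
have prob_fibers : prob Q (fun w => A w.1) = \sum_(z | A z) probZ Q z.
  exact: sum_fiber_pair.
rewrite /cexp sum_fiber_pair (eq_bigr _ fiber_sum) -mulr_suml -prob_fibers.
by rewrite mulrC mulKf ?lt0r_neq0.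
Qed.

End ConditionallyIndependentSample.

Theorem corollary4 (R : realType) (Z S : finType) (n : nat)
  (f : Z -> S -> R) (PZS : {ffun Z * S -> R})
  (Q : {ffun sample Z S n -> R}) :
  is_pmf Q ->
  (forall (i : 'I_n) a b, marg Q i a b = PZS (a, b)) ->
  cond_indep Q ->
  forall p : {ffun Z -> R},
    0 < prob Q (fun w => emp R w.1 == p) ->
    cvar Q (fun w => emp R w.1 == p) (fun w => \sum_(i < n) f (w.1 i) (w.2 i))
    = n%:R * \sum_(a : Z) p a * cvarSZ PZS f a.
Proof.
move=> [Q_ge0 _] marg_Q Q_cond_indep p prob_gt0.
have sum_type (z : {ffun 'I_n -> Z}) (g : Z -> R) :
    emp R z == p -> \sum_i g (z i) = n%:R * \sum_a p a * g a.
  by move=> /eqP <-; exact: sum_emp.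
have cexp_type := cexp_fiberwise_const Q_ge0 marg_Q Q_cond_indep
  (A := fun z => emp R z == p).
have mean : cexp Q (fun w => emp R w.1 == p) (fun w => \sum_(i < n) f (w.1 i) (w.2 i))
    = n%:R * \sum_a p a * cmeanSZ PZS f a.
  apply: cexp_type => // z type_z probZ_gt0 /=.
  have row_sum1 := lawS_given_sum1 marg_Q Q_cond_indep probZ_gt0.
  rewrite (Eprod_sum_coord row_sum1 (fun i => f (z i))).
  exact: (sum_type z (cmeanSZ PZS f)).
rewrite /cvar mean; apply: cexp_type => // z type_z probZ_gt0 /=.
have row_sum1 := lawS_given_sum1 marg_Q Q_cond_indep probZ_gt0.
rewrite -(sum_type z (cmeanSZ PZS f) type_z).
rewrite (Eprod_sum_coord_centred_sq row_sum1 (fun i => f (z i))).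
exact: (sum_type z (cvarSZ PZS f)).
Qed.
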